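(* Let $l\ge3$ and let $a,b\ge2$ be integers with $a+b=l+1$. Let $G$ be a spanning subgraph of $\widetilde O_{k+1}$ containing no cycle of length $4l+2$. If $C$ is a cycle of length $4a$ in $G$ and $C'$ is a cycle of length $4b$ in $G$ with $E(C)\cap E(C')\ne\emptyset$, then $|D(C)\cap D(C')|\ge 2$.
   Context: $\widetilde O_{k+1}=J(2k+1;k,k+1)$ is the bipartite graph with vertex set $\binom{[2k+1]}{k}\cup\binom{[2k+1]}{k+1}$, with $u,v$ adjacent iff $u\subset v$ or $v\subset u$. The direction $d(uv)$ of an edge $\{u,v\}$ is the single element of $u\,\Delta\, v$. For a subgraph $F$, $D(F)=\{d(e): e\in E(F)\}$. A spanning subgraph has the same vertex set. *)

From mathcomp Require Import all_boot.
Set Implicit Arguments. Unset Strict Implicit. Unset Printing Implicit Defensive.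

(* Vertices of J(2k+1;k,k+1) are subsets of [2k+1] = 'I_(2k+1). We take the
   ambient type of all subsets; the vertex set of O~_{k+1} is cut out by
   cardinality (k or k+1) inside the adjacency relation. *)
Definition vtx (k : nat) := {set 'I_(k.*2.+1)}.

Definition isV k (u : vtx k) : bool := (#|u| == k) || (#|u| == k.+1).

Definition adjO k (u v : vtx k) : bool :=
  [&& #|u| == k, #|v| == k.+1 & u \subset v] ||
  [&& #|v| == k, #|u| == k.+1 & v \subset u].

(* A spanning subgraph of O~_{k+1}: same vertex set, edge set a subset of
   E(O~_{k+1}); given as a symmetric edge relation contained in adjO. *)
Definition spanning_sub k (e : rel (vtx k)) : Prop :=
  (forall u v, e u v = e v u) /\ (forall u v, e u v -> adjO u v).

Definition is_cycle (T : finType) (e : rel T) (c : seq T) : bool :=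
  [&& 3 <= size c, uniq c & cycle e c].

Definition cedges (T : finType) (c : seq T) : {set {set T}} :=
  [set [set x; next c x] | x in c].

(* Direction set D(C): union of the symmetric differences u Δ v over edges uv
   of C (each is the singleton {d(uv)}). *)
Definition cdirs k (c : seq (vtx k)) : {set 'I_(k.*2.+1)} :=
  \bigcup_(x <- c) ((x :\: next c x) :|: (next c x :\: x)).

From mathcomp Require Import all_boot zify.
Set Implicit Arguments. Unset Strict Implicit. Unset Printing Implicit Defensive.

(* Let C, C' be cycles of lengths 4a and 4b sharing an edge
   {x, y} and suppose, for a contradiction, that |D(C) ∩ D(C')| <= 1.
   - If i is not a direction of a cycle, membership of i is the same for all
     vertices of that cycle, as it is invariant under the successor map.
   - Hence two vertices lying on both C and C' can only differ in the (at
     most one) common direction; since x and y differ somewhere, every common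
     vertex of C and C' is x or y.
   - Two cycles meeting only in the endpoints of a common edge glue, after
     deleting that edge, into a cycle of length |C| + |C'| - 2; here this is
     4a + 4b - 2 = 4l + 2, a length G does not contain. *)

Lemma cycle_splice (T : eqType) (e : rel T) x y p q :
  uniq [:: x, y & p] -> cycle e [:: x, y & p] ->
  uniq [:: y, x & q] -> cycle e [:: y, x & q] ->
  {in p, forall z, z \notin q} ->
  uniq (y :: p ++ x :: q) && cycle e (y :: p ++ x :: q).
Proof.
move=> U1 C1 U2 C2 pq; apply/andP; split.
  move: U1 U2; rewrite /= !inE !mem_cat !inE cat_uniq /= !negb_or.
  move=> /andP[/andP[_ nyp] /andP[nxp Up]] /andP[/andP[yx nxq] /andP[nyq Uq]].
  rewrite nyp nxp nyq nxq Up Uq yx /= !andbT.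
  by apply/hasPn => z zq; apply: contraL zq; apply: pq.
move: C1 C2; rewrite /= !rcons_path /=.
move=> /andP[_ /andP[yp px]] /andP[_ /andP[xq qy]].
by rewrite cat_path last_cat /= yp px xq qy.
Qed.

Section Cycles.

Variable T : finType.

Lemma cycle_invariant (c : seq T) (P : pred T) : uniq c ->
  {in c, forall y, P (next c y) = P y} -> {in c &, forall x y, P x = P y}.
Proof.
move=> Uc Pnext x y xc yc; apply: (@fconnect_invariant _ (next c)).
  move=> z /=; apply/eqP; have [zc|zNc] := boolP (z \in c); first exact: Pnext.
  by rewrite next_nth (negbTE zNc).
by rewrite (fconnect_cycle (cycle_next Uc) xc).
Qed.

Lemma rot_to_next (c : seq T) x : uniq c -> x \in c -> 1 < size c ->
  exists i p, rot i c = [:: x, next c x & p].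
Proof.
move=> Uc xc c2; case: (rot_to xc) => i [|y p] Hr.
  by move: c2; rewrite -(size_rot i) Hr.
by exists i, p; rewrite Hr -(next_rot i Uc) Hr /next /= eqxx.
Qed.

Lemma doubleton_eq (x y u v : T) : u != v -> [set x; y] = [set u; v] ->
  (x = u /\ y = v) \/ (x = v /\ y = u).
Proof.
move=> uv Exy.
have : u \in [set x; y] by rewrite Exy set21.
have : v \in [set x; y] by rewrite Exy set22.
have : x \in [set u; v] by rewrite -Exy set21.
rewrite !inE => /orP[]/eqP xE /orP[]/eqP vE /orP[]/eqP uE.
all: try by [left | right].
all: by rewrite ?xE ?uE ?vE ?eqxx in uv *.
Qed.

Variable e : rel T.
Hypothesis e_sym : symmetric e.

Lemma cycle_from_edge (c : seq T) x y : is_cycle e c -> [set x; y] \in cedges c ->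
  exists p, [/\ uniq [:: x, y & p], cycle e [:: x, y & p] & perm_eq c [:: x, y & p]].
Proof.
case/and3P=> c3 Uc Cc /imsetP[z zc Exy].
have [i [p Hr]] := rot_to_next Uc zc (ltnW c3).
have Up : uniq [:: z, next c z & p] by rewrite -Hr rot_uniq.
have Cp : cycle e [:: z, next c z & p] by rewrite -Hr rot_cycle.
have Pp : perm_eq c [:: z, next c z & p] by rewrite -Hr perm_sym perm_rot.
have zn : z != next c z by move: Up; rewrite /= inE negb_or => /andP[/andP[]].
have [[-> ->]|[-> ->]] := doubleton_eq zn Exy.
  by exists p.
exists (rev p).
have Erev : [:: next c z, z & rev p] = rot (size p) (rev [:: z, next c z & p]).
  by rewrite !rev_cons -!cats1 -catA -(size_rev p) rot_size_cat.
rewrite Erev rot_uniq rev_uniq rot_cycle rev_cycle (eq_cycle (fun u v => e_sym v u)).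
by rewrite perm_sym perm_rot perm_rev perm_sym.
Qed.

Lemma cedges_endpoints (c : seq T) x y : is_cycle e c -> [set x; y] \in cedges c ->
  [/\ x \in c, y \in c & x != y].
Proof.
move=> cyc /(cycle_from_edge cyc)[p [Up _ Pp]].
rewrite !(perm_mem Pp) !inE !eqxx ?orbT.
by move: Up; rewrite /= inE negb_or => /andP[/andP[]].
Qed.

Lemma cycle_glue (C C' : seq T) x y : is_cycle e C -> is_cycle e C' ->
  [set x; y] \in cedges C -> [set x; y] \in cedges C' ->
  {in C, forall z, z \in C' -> (z == x) || (z == y)} ->
  exists c, is_cycle e c /\ size c = size C + size C' - 2.
Proof.
move=> cycC cycC' EC EC' only_xy.
have [p [Up Cp Pp]] := cycle_from_edge cycC EC.
have [q [Uq Cq Pq]] := cycle_from_edge cycC' (etrans (congr1 _ (setUC _ _)) EC').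
have disj : {in p, forall z, z \notin q}.
  move=> z zp; apply/negP => zq.
  have zC : z \in C by rewrite (perm_mem Pp) !inE zp !orbT.
  have zC' : z \in C' by rewrite (perm_mem Pq) !inE zq !orbT.
  by case/orP: (only_xy z zC zC') => /eqP zE; move: Up; rewrite /= !inE -zE zp ?orbT => /and3P[].
have /andP[Us Cs] := cycle_splice Up Cp Uq Cq disj.
exists (y :: p ++ x :: q); rewrite /is_cycle Us Cs !andbT.
have /and3P[sC _ _] := cycC; rewrite (perm_size Pp) /= in sC.
rewrite (perm_size Pp) (perm_size Pq) /= size_cat /=.
set n := size p in sC *; set m := size q.
by clear - sC; split; lia.
Qed.
End Cycles.

Lemma cdirs_invariant k (c : seq (vtx k)) i : uniq c -> i \notin cdirs c ->
  {in c &, forall x y : vtx k, (i \in x) = (i \in y)}.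
Proof.
move=> Uc iNc; apply: (cycle_invariant (P := fun x : vtx k => i \in x) Uc).
move=> y yc; apply/eqP; apply: contraR iNc => ne.
rewrite /cdirs (big_rem y) //= !inE.
by move: ne; case: (i \in y); case: (i \in next c y).
Qed.

Lemma common_vertices_agree k (C C' : seq (vtx k)) x y i : uniq C -> uniq C' ->
  x \in C -> x \in C' -> y \in C -> y \in C' ->
  i \notin cdirs C :&: cdirs C' -> (i \in x) = (i \in y).
Proof.
move=> UC UC' xC xC' yC yC'; rewrite inE negb_and => /orP[iNC|iNC'].
  exact: cdirs_invariant UC iNC x y xC yC.
exact: cdirs_invariant UC' iNC' x y xC' yC'.
Qed.

(* Key step: if C and C' have at most one common direction and share two
   distinct vertices u and v, then u and v are their only common vertices,
   since a common vertex agrees with u everywhere except at the single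
   coordinate i where u and v differ. *)
Lemma common_vertices_pair k (C C' : seq (vtx k)) u v z : uniq C -> uniq C' ->
  u \in C -> u \in C' -> v \in C -> v \in C' -> u != v ->
  #|cdirs C :&: cdirs C'| <= 1 -> z \in C -> z \in C' -> (z == u) || (z == v).
Proof.
move=> UC UC' uC uC' vC vC' uv few zC zC'.
have agree := common_vertices_agree UC UC'.
have [i iuv] : exists i, (i \in u) != (i \in v).
  apply/existsP; apply: contraNT uv => /existsPn same.
  by apply/eqP/setP => j; apply/eqP/negbNE/same.
have iS : i \in cdirs C :&: cdirs C'.
  by apply: contraR iuv => iNS; rewrite (agree u v i uC uC' vC vC' iNS).
have only_i j : j != i -> j \notin cdirs C :&: cdirs C'.
  by apply: contra => jS; rewrite (elimT card_le1_eqP few j i jS iS).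
have [zu|zu] := eqVneq (i \in z) (i \in u).
  apply/orP; left; apply/eqP/setP => j; have [->|ji] := eqVneq j i => //.
  exact: agree zC zC' uC uC' (only_i j ji).
apply/orP; right; apply/eqP/setP => j; have [->|ji] := eqVneq j i.
  by move: zu iuv; case: (i \in z); case: (i \in u); case: (i \in v).
by rewrite (agree z u j) ?(agree u v j) ?only_i.
Qed.

Theorem lemma5p4 (k l a b : nat) (e : rel (vtx k)) :
  3 <= l -> 2 <= a -> 2 <= b -> a + b = l.+1 ->
  spanning_sub e ->
  ~ (exists c : seq (vtx k), is_cycle e c /\ size c = 4 * l + 2) ->
  forall C C' : seq (vtx k),
    is_cycle e C -> size C = 4 * a ->
    is_cycle e C' -> size C' = 4 * b ->
    cedges C :&: cedges C' != set0 ->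
    2 <= #|cdirs C :&: cdirs C'|.
Proof.
move=> _ _ _ hab [e_sym _] no_cycle C C' cycC sC cycC' sC'.
case/set0Pn=> E /setIP[EC EC']; rewrite leqNgt; apply/negP => few; apply: no_cycle.
have /imsetP[x _ Exy] := EC; rewrite {}Exy in EC EC'.
have [xC yC xy] := cedges_endpoints e_sym cycC EC.
have [xC' yC' _] := cedges_endpoints e_sym cycC' EC'.
have [UC UC'] : uniq C /\ uniq C' by case/and3P: cycC; case/and3P: cycC'.
have only_xy z : z \in C -> z \in C' -> (z == x) || (z == next C x).
  exact: common_vertices_pair UC UC' xC xC' yC yC' xy few.
have [c [cyc sc]] := cycle_glue e_sym cycC cycC' EC EC' only_xy.
by exists c; split; rewrite // sc sC sC'; clear - hab; lia.
Qed.
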